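(* Let $L\ge3$, $m\ge1$, $x_1>\cdots>x_N$ real, $\mathbf X=(x_1,\dots,x_N)^T$. Let $A_{L,\mathrm{par}}(\mathbf X)$ be the set of all vectors obtainable as the (sign-normalized) output of a single sign-activated unit with hidden widths $m_1=\cdots=m_{L-2}=m$ and $m_{L-1}=1$. Then every vector in $A_{L,\mathrm{par}}(\mathbf X)$ belongs to $\mathcal H^{(m)}$, i.e. starts with $1$ and switches at most $m$ times.
   Context: $\sigma(x)=\mathrm{sign}(x)$ with $\mathrm{sign}(x)=1$ if $x\ge0$, $-1$ if $x<0$, applied entrywise. A single unit with widths $m_0=1,m_1,\dots,m_{L-1}=1$ maps $\mathbf X$ to $\mathbf X^{(L)}$ via $\mathbf X^{(1)}=\mathbf X$ and $\mathbf X^{(l+1)}=\sigma(\mathbf X^{(l)}\mathbf W^{(l)}+\mathbf 1\mathbf b^{(l)})\in\{-1,1\}^{N\times m_l}$ for $l\in[L-1]$, with arbitrary $\mathbf W^{(l)}\in\mathbb R^{m_{l-1}\times m_l}$, $\mathbf b^{(l)}\in\mathbb R^{1\times m_l}$. $A_{L,\mathrm{par}}(\mathbf X)$ is the set of all vectors $\epsilon\mathbf X^{(L)}\in\{-1,1\}^N$ over all such weights and biases, where $\epsilon\in\{-1,1\}$ is chosen so that the first entry is $1$. A vector $\mathbf h\in\{-1,1\}^N$ switches at $n>1$ if $h_n\neq h_{n-1}$; $\mathcal H^{(K)}$ is the set of vectors in $\{-1,1\}^N$ with first entry $1$ that switch at most $K$ times. *)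

From HB Require Import structures.
From mathcomp Require Import all_boot all_order all_algebra.
From mathcomp Require Import reals.
Set Implicit Arguments. Unset Strict Implicit. Unset Printing Implicit Defensive.
Import Order.TTheory GRing.Theory Num.Theory.
Local Open Scope ring_scope.

Definition sgn {R : realType} (x : R) : R := if 0 <= x then 1 else -1.

Definition sgn_layer {R : realType} {N a b : nat}
  (X : 'M[R]_(N, a)) (W : 'M[R]_(a, b)) (bias : 'rV[R]_b) : 'M[R]_(N, b) :=
  map_mx sgn (X *m W + (const_mx 1 : 'M[R]_(N, 1)) *m bias).

(* Output X^(L) of a unit with widths m_0 = 1, m_1 = ... = m_(L-2) = m,
   m_(L-1) = 1 (L-1 layers): a first layer 1 -> m (W1,b1), L-3 hidden
   layers m -> m (Ws i, bs i for i = 0 .. L-4), and a last layer m -> 1. *)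
Definition unit_output {R : realType} (L m N : nat) (X : 'cV[R]_N)
  (W1 : 'M[R]_(1, m)) (b1 : 'rV[R]_m)
  (Ws : nat -> 'M[R]_(m, m)) (bs : nat -> 'rV[R]_m)
  (WL : 'M[R]_(m, 1)) (bL : 'rV[R]_1) : 'cV[R]_N :=
  let H1 := sgn_layer X W1 b1 in
  let H := foldl (fun H i => sgn_layer H (Ws i) (bs i)) H1 (iota 0 (L - 3)) in
  sgn_layer H WL bL.

Definition A_par {R : realType} (L m N : nat) (X : 'cV[R]_N) (h : 'cV[R]_N) : Prop :=
  exists (W1 : 'M[R]_(1, m)) (b1 : 'rV[R]_m)
         (Ws : nat -> 'M[R]_(m, m)) (bs : nat -> 'rV[R]_m)
         (WL : 'M[R]_(m, 1)) (bL : 'rV[R]_1) (eps : R),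
    let out := unit_output L X W1 b1 Ws bs WL bL in
    (eps = 1 \/ eps = -1) /\
    (forall i : 'I_N, val i = 0%N -> eps * out i 0 = 1) /\
    h = eps *: out.

(* number of switches: indices n > 1 (1-based) with h_n <> h_(n-1),
   i.e. 0-based consecutive pairs (i, i+1) with different entries *)
Definition switches {R : realType} {N : nat} (h : 'cV[R]_N) : nat :=
  #|[set p : 'I_N * 'I_N | (val p.2 == (val p.1).+1) && (h p.1 0 != h p.2 0)]|.

Definition H_K {R : realType} (K N : nat) (h : 'cV[R]_N) : Prop :=
  (forall i : 'I_N, h i 0 = 1 \/ h i 0 = -1) /\
  (forall i : 'I_N, val i = 0%N -> h i 0 = 1) /\
  (switches h <= K)%N.

From HB Require Import structures.
From mathcomp Require Import all_boot all_order all_algebra.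
From mathcomp Require Import reals.
From mathcomp Require Import lra.
Set Implicit Arguments. Unset Strict Implicit. Unset Printing Implicit Defensive.
Import Order.TTheory GRing.Theory Num.Theory.
Local Open Scope ring_scope.

(* A first-layer neuron computes sgn(x_i w + b), which is monotone in i because
   the inputs are sorted, so it switches at most once along the samples.  Every
   later layer acts row by row, so the output can only switch where one of the
   m first-layer neurons switches; hence there are at most m switches. *)

Definition switch_at {T : eqType} {N : nat} (f : 'I_N -> T) (p : 'I_N * 'I_N) :=
  (val p.2 == (val p.1).+1) && (f p.1 != f p.2).

Lemma switchesE (R : realType) N (h : 'cV[R]_N) :
  switches h = #|[set p | switch_at (fun i => h i 0) p]|.
Proof. by []. Qed.

Lemma eq_switch_at (T : eqType) N (f g : 'I_N -> T) :
  f =1 g -> switch_at f =1 switch_at g.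
Proof. by move=> fg p; rewrite /switch_at !fg. Qed.

Lemma switch_at_factor (T U : eqType) N (f : 'I_N -> T) (g : 'I_N -> U) p :
  (forall i k, f i = f k -> g i = g k) -> switch_at g p -> switch_at f p.
Proof.
move=> fact /andP[p21 gneq]; rewrite /switch_at p21 /=.
apply: contra gneq => /eqP fe.
by rewrite (fact _ _ fe).
Qed.

Lemma switch_at_inj_comp (T U : eqType) N (g : T -> U) (f : 'I_N -> T) :
  injective g -> switch_at (g \o f) =1 switch_at f.
Proof. by move=> g_inj p; rewrite /switch_at /= (inj_eq g_inj). Qed.

Lemma switch_at_row (R : eqType) N n (A : 'M[R]_(N, n)) p :
  switch_at (fun i => row i A) p -> exists j, switch_at (fun i => A i j) p.
Proof.
case/andP=> p21 neq; have /forallPn[j neq_j] : ~~ [forall j, A p.1 j == A p.2 j].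
  by apply: contra neq => /forallP eqA; apply/eqP/rowP => j; rewrite !mxE; apply/eqP.
by exists j; rewrite /switch_at p21.
Qed.

Section AntitoneSwitch.

Variables (N : nat) (P : 'I_N -> bool).
Hypothesis P_anti : forall u v : 'I_N, (u <= v)%N -> P v -> P u.

Lemma antitone_switch_at p : switch_at P p -> P p.1 && ~~ P p.2.
Proof.
case/andP=> /eqP p21 neq; have anti21 : P p.2 -> P p.1 by apply: P_anti; rewrite p21.
by move: neq anti21; case: (P p.1); case: (P p.2) => // _ /(_ isT).
Qed.

Lemma antitone_switch_at_eq p q : switch_at P p -> switch_at P q -> p = q.
Proof.
wlog le_pq : p q / (val p.1 <= val q.1)%N.
  move=> wlog sp sq; case/orP: (leq_total (val p.1) (val q.1)) => le.
    exact: wlog.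
  by apply/esym/wlog.
move=> sp sq; have /andP[_ /negP Pp2] := antitone_switch_at sp.
have /andP[Pq1 _] := antitone_switch_at sq.
have e1 : val p.1 = val q.1.
  apply/eqP; rewrite eqn_leq le_pq leqNgt; apply/negP => lt.
  by apply: Pp2; apply: P_anti Pq1; move: sp => /andP[/eqP -> _].
have e2 : val p.2 = val q.2.
  by move: sp sq => /andP[/eqP -> _] /andP[/eqP -> _]; rewrite e1.
by case: p q e1 e2 {le_pq sp sq Pp2 Pq1} => [p1 p2] [q1 q2] /= /val_inj -> /val_inj ->.
Qed.

End AntitoneSwitch.

Lemma card_switch_at_le (T U : eqType) (J : finType) N
    (f : 'I_N -> T) (g : J -> 'I_N -> U) :
  (forall p, switch_at f p -> exists j, switch_at (g j) p) ->
  (forall j p q, switch_at (g j) p -> switch_at (g j) q -> p = q) ->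
  (#|[set p | switch_at f p]| <= #|J|)%N.
Proof.
move=> f_sw g_uniq; pose pos j := [pick p | switch_at (g j) p].
have sub : [set p | switch_at f p] \subset pmap pos (enum J).
  apply/subsetP => p; rewrite inE => /f_sw[j gj].
  rewrite mem_pmap; apply/mapP; exists j; first by rewrite mem_enum.
  rewrite /pos; case: pickP => [q gq|/(_ p)]; last by rewrite gj.
  by rewrite (g_uniq j p q).
apply: leq_trans (subset_leq_card sub) _; apply: leq_trans (card_size _) _.
by rewrite size_pmap cardE count_size.
Qed.

Lemma sgn_pm (R : realType) (v : R) : sgn v = 1 \/ sgn v = -1.
Proof. by rewrite /sgn; case: (0 <= v); [left | right]. Qed.

Lemma sgn_affine_switch_at_eq (R : realType) N (x : 'I_N -> R) (w b : R) p q :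
  (forall i j : 'I_N, (i < j)%N -> x j < x i) ->
  switch_at (fun i => sgn (x i * w + b)) p ->
  switch_at (fun i => sgn (x i * w + b)) q -> p = q.
Proof.
move=> x_decr; pose P i := 0 <= x i * w + b.
have sP : switch_at (fun i => sgn (x i * w + b)) =1 switch_at P.
  apply: (switch_at_inj_comp (g := fun c : bool => if c then 1 else -1 : R)).
  by case; case=> // e; exfalso; move: e; lra.
have x_anti (u v : 'I_N) : (u <= v)%N -> x v <= x u.
  by rewrite leq_eqVlt => /orP[/eqP/val_inj -> // | /x_decr/ltW].
rewrite !sP; have [w_ge0 | w_lt0] := lerP 0 w.
  apply: antitone_switch_at_eq => u v /x_anti le_xvu; rewrite /P => /le_trans; apply.
  by rewrite lerD2r ler_wpM2r.
rewrite -!(switch_at_inj_comp P negb_inj); apply: antitone_switch_at_eq => u v.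
move=> /x_anti le_xvu /=; rewrite /P -!ltNge => lt_v; apply: le_lt_trans lt_v.
by rewrite lerD2r ler_wnM2r // ltW.
Qed.

Lemma row_sgn_layer (R : realType) N a b (X : 'M[R]_(N, a)) W (bias : 'rV[R]_b) i :
  row i (sgn_layer X W bias) = sgn_layer (row i X) W bias.
Proof.
by rewrite /sgn_layer -map_row; congr map_mx; rewrite linearD /= !row_mul row_const.
Qed.

Lemma row_foldl_sgn_layer (R : realType) N m
    (Ws : nat -> 'M[R]_(m, m)) (bs : nat -> 'rV[R]_m) s (H : 'M[R]_(N, m)) i :
  row i (foldl (fun H k => sgn_layer H (Ws k) (bs k)) H s)
  = foldl (fun H k => sgn_layer H (Ws k) (bs k)) (row i H) s.
Proof. by elim: s H => [|k s IHs] H //=; rewrite IHs row_sgn_layer. Qed.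

Lemma sgn_layer_colE (R : realType) N b (X : 'cV[R]_N) W (bias : 'rV[R]_b) i j :
  sgn_layer X W bias i j = sgn (X i 0 * W 0 j + bias 0 j).
Proof. by rewrite /sgn_layer !mxE !big_ord1 !mxE mul1r. Qed.

Lemma unit_output_row_eq (R : realType) (L m N : nat) (X : 'cV[R]_N)
    (W1 b1 : 'rV[R]_m) (Ws : nat -> 'M[R]_m) (bs : nat -> 'rV[R]_m)
    (WL : 'cV[R]_m) (bL : 'rV[R]_1) (i k : 'I_N) :
  row i (sgn_layer X W1 b1) = row k (sgn_layer X W1 b1) ->
  unit_output L X W1 b1 Ws bs WL bL i 0 = unit_output L X W1 b1 Ws bs WL bL k 0.
Proof.
move=> eq_ik; set out := unit_output _ _ _ _ _ _ _ _.
suff : row i out = row k out by move/rowP/(_ 0); rewrite !mxE.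
by rewrite /out /unit_output !row_sgn_layer !row_foldl_sgn_layer eq_ik.
Qed.

Lemma unit_output_pm (R : realType) (L m N : nat) (X : 'cV[R]_N)
    (W1 b1 : 'rV[R]_m) (Ws : nat -> 'M[R]_m) (bs : nat -> 'rV[R]_m)
    (WL : 'cV[R]_m) (bL : 'rV[R]_1) (i : 'I_N) :
  unit_output L X W1 b1 Ws bs WL bL i 0 = 1 \/
  unit_output L X W1 b1 Ws bs WL bL i 0 = -1.
Proof. by rewrite mxE; apply: sgn_pm. Qed.

Theorem proposition9 (R : realType) (L m N : nat) (X : 'cV[R]_N)
  (hL : (3 <= L)%N) (hm : (1 <= m)%N)
  (hX : forall i j : 'I_N, (i < j)%N -> X j 0 < X i 0)
  (h : 'cV[R]_N) :
  A_par L m X h -> H_K m h.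
Proof.
case=> W1 [b1 [Ws [bs [WL [bL [eps]]]]]] /= [eps_pm [out0 ->]].
set H1 := sgn_layer X W1 b1.
split; [|split].
- move=> i; rewrite mxE.
  case: eps_pm => ->; case: (unit_output_pm L X W1 b1 Ws bs WL bL i) => ->;
    rewrite ?mul1r ?mulN1r ?opprK; [left | right | right | left]; done.
- by move=> i i0; rewrite mxE; apply: out0.
rewrite switchesE -[n in (_ <= n)%N]card_ord.
apply: (card_switch_at_le (g := fun j i => H1 i j)).
- move=> p sw; apply: switch_at_row; apply: switch_at_factor sw.
  move=> i k /unit_output_row_eq.
  by rewrite mxE [RHS]mxE => ->.
- move=> j p q; rewrite !(eq_switch_at (fun i => sgn_layer_colE X W1 b1 i j)).
  exact: sgn_affine_switch_at_eq.
Qed.
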